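(* Let $I\subset S=K[x_1,\dots,x_t]$ be an $\mathfrak m$-primary monomial ideal with $x_i^{a_i}\in\mathscr G(I)$, $a_i\in\mathbb Z_{>0}$, for $i=1,\dots,t$. Then $I=\langle x_1^{a_1},\dots,x_t^{a_t}\rangle$ if and only if $v(I)=\sum_{i=1}^t a_i-t$.
   Context: $K$ is a field, $S$ is standard graded and $\mathfrak m=\langle x_1,\dots,x_t\rangle$. For a proper graded ideal $I$, the $v$-number is $v(I)=\min\{k\ge 0 : \exists f\in S_k,\ \mathcal P\in\operatorname{Ass}(S/I) \text{ with } (I:f)=\mathcal P\}$. $\mathscr G(I)$ is the minimal monomial generating set of the monomial ideal $I$. *)

From HB Require Import structures.
From mathcomp Require Import all_boot all_order all_algebra.
From mathcomp Require Import mpoly.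
Set Implicit Arguments. Unset Strict Implicit. Unset Printing Implicit Defensive.
Import GRing.Theory.
Local Open Scope ring_scope.

Section Defs.
Variables (K : fieldType) (t : nat).
Local Notation S := {mpoly K[t]}.

Definition pset := S -> Prop.

Definition is_ideal (I : pset) : Prop :=
  [/\ I 0, (forall f g, I f -> I g -> I (f + g)) & (forall f g, I g -> I (f * g))].

Definition ideal_gen (A : pset) : pset := fun f =>
  exists s : seq (S * S), (forall p, p \in s -> A p.2) /\
                          f = \sum_(p <- s) p.1 * p.2.

Definition monomial (m : 'X_{1..t}) : S := 'X_[m].

Definition is_monomial_ideal (I : pset) : Prop :=
  is_ideal I /\ forall f, I f <-> ideal_gen (fun g => exists m, g = monomial m /\ I g) f.

Definition mdiv (m1 m2 : 'X_{1..t}) : Prop := forall i, (m1 i <= m2 i)%N.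

Definition in_mingens (I : pset) (m : 'X_{1..t}) : Prop :=
  I (monomial m) /\ forall m', I (monomial m') -> mdiv m' m -> m' = m.

Definition maxideal : pset := ideal_gen (fun g => exists i : 'I_t, g = 'X_i).

Definition radical (I : pset) : pset := fun f => exists k : nat, I (f ^+ k).

Definition is_proper (I : pset) : Prop := ~ I 1.

Definition is_primary (I : pset) : Prop :=
  [/\ is_ideal I, is_proper I &
      forall f g, I (f * g) -> ~ I f -> radical I g].

Definition is_m_primary (I : pset) : Prop :=
  is_primary I /\ forall f, radical I f <-> maxideal f.

Definition is_prime (P : pset) : Prop :=
  [/\ is_ideal P, is_proper P & forall f g, P (f * g) -> P f \/ P g].

Definition colon (I : pset) (f : S) : pset := fun g => I (g * f).

Definition eq_pset (A B : pset) : Prop := forall f, A f <-> B f.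

Definition is_ass (I : pset) (P : pset) : Prop :=
  is_prime P /\ exists g : S, eq_pset (colon I g) P.

Definition homog_deg (k : nat) (f : S) : Prop :=
  forall m, m \in msupp f -> mdeg m = k.

Definition vnum_witness (I : pset) (k : nat) : Prop :=
  exists f : S, exists P : pset, homog_deg k f /\ is_ass I P /\ eq_pset (colon I f) P.

Definition is_vnumber (I : pset) (v : nat) : Prop :=
  vnum_witness I v /\ forall k, vnum_witness I k -> (v <= k)%N.

End Defs.

(* If x^b is a socle monomial of I (x^b is not in I, but every x_i x^b is), then (I : x^b) is the
   maximal ideal.  Conversely, if (I : f) = P is prime, then P contains the pure powers x_i^a_i,
   hence every x_i, so every x_i f lies in I while f does not; as I is monomial, some monomial x^b
   of f is a socle monomial, and |b| = deg f.  So the degrees competing in the definition of v(I)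
   are exactly the degrees of the socle monomials of I.  These all lie below the corner
   c = (a_1 - 1, ..., a_t - 1), and for J = <x_1^a_1, ..., x_t^a_t> the corner is the only one,
   whence v(J) = |c| = sum a_i - t.  If v(I) = |c|, then some socle monomial of I has degree |c|,
   so it is c; thus x^c is not in I, and a monomial of I, not lying below c, must lie in J. *)
From mathcomp Require Import all_boot all_order all_algebra.
From mathcomp Require Import mpoly zify.
From Stdlib Require Import Classical.
Import GRing.Theory.
Local Open Scope ring_scope.

Section MonomialIdeals.
Set Implicit Arguments.
Unset Strict Implicit.
Variables (K : fieldType) (t : nat).
Local Notation S := {mpoly K[t]}.
Implicit Types (I P A : pset K t) (f g : S) (b m : 'X_{1..t}).

Lemma lepm_U_mulmn (i : 'I_t) n m : (U_(i) *+ n <= m)%MM = (n <= m i)%N.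
Proof.
apply/mnm_lepP/idP => [/(_ i)|le_n j]; first by rewrite mulmnE mnm1E eqxx mul1n.
by rewrite mulmnE mnm1E; case: eqP => [<-|_]; rewrite ?mul1n ?mul0n.
Qed.

Lemma lepm_U (i : 'I_t) m : (U_(i) <= m)%MM = (0 < m i)%N.
Proof.
apply/mnm_lepP/idP => [/(_ i)|mi_gt0 j]; rewrite mnm1E ?eqxx //.
by case: eqP => [<-|].
Qed.

Lemma lepm_mdeg_eq b m : (b <= m)%MM -> mdeg b = mdeg m -> b = m.
Proof.
move=> le_bm deg_bm.
have /eqP : mdeg (m - b) = 0%N by have := congr1 mdeg (submK le_bm); rewrite mdegD; lia.
by rewrite mdeg_eq0 => /eqP mb0; rewrite -(submK le_bm) mb0 add0m.
Qed.

Lemma ideal_sum I (T : eqType) (r : seq T) (F : T -> S) :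
  is_ideal I -> {in r, forall x, I (F x)} -> I (\sum_(x <- r) F x).
Proof. by move=> [I0 ID _] IF; rewrite big_seq; apply: big_ind. Qed.

Lemma ideal_gen_ideal A : is_ideal (ideal_gen A).
Proof.
split.
- by exists [::]; rewrite big_nil; split.
- move=> _ _ [s1 [A1 ->]] [s2 [A2 ->]]; exists (s1 ++ s2); rewrite big_cat.
  by split=> // p; rewrite mem_cat => /orP [/A1|/A2].
- move=> f _ [s [sA ->]]; exists [seq (f * p.1, p.2) | p <- s]; split.
    by move=> q /mapP [p sp ->] /=; apply: sA.
  by rewrite big_map mulr_sumr; apply: eq_bigr => p _; rewrite mulrA.
Qed.

Lemma mem_ideal_gen A g : A g -> ideal_gen A g.
Proof.
move=> Ag; exists [:: (1, g)]; rewrite big_seq1 mul1r.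
by split=> // p; rewrite mem_seq1 => /eqP ->.
Qed.

Lemma ideal_gen_min I A : is_ideal I -> (forall g, A g -> I g) ->
  forall f, ideal_gen A f -> I f.
Proof.
move=> idI AI _ [s [As ->]]; apply: ideal_sum => // p /As /AI.
by case: idI => _ _; apply.
Qed.

Lemma idealX_lepm I m m' : is_ideal I -> I 'X_[m] -> (m <= m')%MM -> I 'X_[m'].
Proof. by move=> [_ _ IM] Im le_mm'; rewrite -(submK le_mm') mpolyXD; apply: IM. Qed.

Lemma ideal_msupp I f : is_ideal I -> (forall m, m \in msupp f -> I 'X_[m]) -> I f.
Proof.
move=> idI Ifm; rewrite (mpolyE f); apply: ideal_sum => // m fm.
by rewrite -mul_mpolyC; case: idI => _ _; apply; apply: Ifm.
Qed.

Lemma msupp_ideal_gen_monomials A (Q : 'X_{1..t} -> Prop) f m :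
  (forall g, A g -> exists2 m0, g = 'X_[m0] & Q m0) ->
  ideal_gen A f -> m \in msupp f -> exists2 m0, Q m0 & (m0 <= m)%MM.
Proof.
move=> AQ [s [As ->]] /msupp_sum_le /flatten_mapP [p].
rewrite mem_filter => /As/AQ [m0 -> Qm0].
by rewrite (perm_mem (msuppMX _ _)) => /mapP [m' _ ->]; exists m0; last exact: lem_addr.
Qed.

Lemma monomial_ideal_msupp I f m : is_monomial_ideal I -> I f -> m \in msupp f -> I 'X_[m].
Proof.
move=> [idI genI] /genI If fm.
have [|m0 Im0] := msupp_ideal_gen_monomials (Q := fun m0 => I 'X_[m0]) _ If fm.
  by move=> _ [m0 [-> Im0]]; exists m0.
exact: idealX_lepm.
Qed.

Lemma pure_power_exponent_lt I (a : 'I_t -> nat) b :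
  is_ideal I -> (forall i, I 'X_[U_(i) *+ a i]) -> ~ I 'X_[b] -> forall i, (b i < a i)%N.
Proof.
move=> idI Ipow nIb i; rewrite ltnNge; apply/negP => le_ab; apply: nIb.
by apply: idealX_lepm idI (Ipow i) _; rewrite lepm_U_mulmn.
Qed.

Lemma maxidealP g : @maxideal K t g <-> g@_0 = 0.
Proof.
split=> [mg | g0].
  apply/eqP; apply: contraT; rewrite -mcoeff_msupp => g0.
  have [|_ [i ->]] :=
    msupp_ideal_gen_monomials (Q := fun m0 => exists i, m0 = U_(i)%MM) _ mg g0.
    by move=> _ [i ->]; exists U_(i)%MM => //; exists i.
  by rewrite lepm_U mnm0E.
apply: ideal_msupp (ideal_gen_ideal _) _ => m gm.
have [i mi_gt0] : exists i, (0 < m i)%N.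
  apply/existsP; apply: contraTT gm => /existsPn m0.
  suff -> : m = 0%MM by rewrite mcoeff_msupp g0 eqxx.
  by apply/mnmP => i; rewrite mnm0E; apply/eqP; rewrite -leqn0 leqNgt m0.
apply: idealX_lepm (ideal_gen_ideal _) _ (_ : U_(i) <= m)%MM.
  by apply: mem_ideal_gen; exists i.
by rewrite lepm_U.
Qed.

Lemma maxideal_prime : is_prime (@maxideal K t).
Proof.
split; first exact: ideal_gen_ideal.
  by move/maxidealP/eqP; rewrite mcoeff1 eqxx oner_eq0.
move=> f g /maxidealP; rewrite (rmorphM (mcoeff 0)) => /eqP.
by rewrite mulf_eq0 => /orP [] /eqP /maxidealP; [left | right].
Qed.

Lemma prime_expr P g n : is_prime P -> P (g ^+ n) -> P g.
Proof.
move=> [_ properP primeP]; elim: n => [|n IHn]; first by rewrite expr0.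
by rewrite exprS => /primeP [] // /IHn.
Qed.

Lemma colon_ideal I g : is_ideal I -> is_ideal (colon I g).
Proof.
move=> [I0 ID IM]; split; rewrite /colon.
- by rewrite mul0r.
- by move=> f h If Ih; rewrite mulrDl; apply: ID.
- by move=> f h Ih; rewrite -mulrA; apply: IM.
Qed.

Lemma ideal_sub_colon I f g : is_ideal I -> I f -> colon I g f.
Proof. by move=> [_ _ IM] If; rewrite /colon mulrC; apply: IM. Qed.

Definition socle_monomial I b := ~ I 'X_[b] /\ forall i, I 'X_[b + U_(i)].

Lemma eq_socle_monomial I1 I2 b :
  eq_pset I1 I2 -> socle_monomial I1 b <-> socle_monomial I2 b.
Proof.
move=> eqI; split=> [] [nIb IbU]; split=> [/eqI //|i]; exact/eqI.
Qed.

Section Socle.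
Variable I : pset K t.
Hypothesis monI : is_monomial_ideal I.

Lemma colon_socle_monomial b :
  socle_monomial I b -> eq_pset (colon I 'X_[b]) (@maxideal K t).
Proof.
move=> [nIb IbU] g; split=> [Igb | ].
  apply/maxidealP/eqP; apply: contraT => g0; case: nIb.
  apply: monomial_ideal_msupp monI Igb _.
  by rewrite mcoeff_msupp -[b in _@_b]addm0 mcoeffMX.
apply: ideal_gen_min (colon_ideal _ monI.1) _ g => _ [i ->].
by rewrite /colon -mpolyXD addmC.
Qed.

Lemma vnum_witness_socle b : socle_monomial I b -> vnum_witness I (mdeg b).
Proof.
move=> socle_b; exists 'X_[b], (@maxideal K t); split.
  by move=> m; rewrite msuppX mem_seq1 => /eqP ->.
have colon_b := colon_socle_monomial socle_b.
by split=> //; split; [exact: maxideal_prime | exists 'X_[b]].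
Qed.

Variable a : 'I_t -> nat.
Hypothesis Ipow : forall i, I 'X_[U_(i) *+ a i].

Lemma socle_of_vnum_witness k :
  vnum_witness I k -> exists2 b, socle_monomial I b & mdeg b = k.
Proof.
move=> [f [P [homf [[primeP _] colonP]]]].
have [_ properP _] := primeP.
have nIf : ~ I f by move=> If; apply/properP/colonP; rewrite /colon mul1r.
have [b fb nIb] : exists2 b, b \in msupp f & ~ I 'X_[b].
  apply: NNPP => nb; apply/nIf/(ideal_msupp monI.1) => m fm.
  by apply: NNPP => nIm; apply: nb; exists m.
exists b; last exact: homf.
split=> // i.
have Pxi : P 'X_i.
  apply: (prime_expr (n := a i)) primeP _; apply/colonP/(ideal_sub_colon _ monI.1).
  by rewrite mpolyXn; apply: Ipow.
apply: monomial_ideal_msupp monI ((colonP _).2 Pxi) _.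
by rewrite addmC mulrC mcoeff_msupp mcoeffMX -mcoeff_msupp.
Qed.

End Socle.

Section PurePowers.
Variable a : 'I_t -> nat.
Hypothesis a_gt0 : forall i, (0 < a i)%N.

Definition pure_powers : pset K t := ideal_gen (fun g => exists i, g = 'X_i ^+ a i).

Definition corner : 'X_{1..t} := [multinom (a i).-1 | i < t].

Lemma mdeg_corner : mdeg corner = (\sum_(i < t) a i - t)%N.
Proof.
have <- : (\sum_(i < t) (a i).-1 + t = \sum_(i < t) a i)%N.
  rewrite -[X in (_ + X)%N]card_ord -sum1_card -big_split /=.
  by apply: eq_bigr => i _; rewrite addn1 prednK.
by rewrite addnK mdegE; apply: eq_bigr => i _; rewrite mnmE.
Qed.

Lemma lepm_corner m : (forall i, m i < a i)%N -> (m <= corner)%MM.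
Proof. by move=> m_lt; apply/mnm_lepP => i; rewrite mnmE; have := m_lt i; lia. Qed.

Lemma pure_powersX m : pure_powers 'X_[m] <-> exists i, (a i <= m i)%N.
Proof.
split=> [Jm | [i le_am]].
  have Xm : m \in msupp ('X_[m] : S) by rewrite msuppX mem_seq1.
  have [|_ [i ->]] := msupp_ideal_gen_monomials
    (Q := fun m0 => exists i, m0 = (U_(i) *+ a i)%MM) _ Jm Xm.
    by move=> _ [i ->]; exists (U_(i) *+ a i)%MM; [rewrite mpolyXn | exists i].
  by rewrite lepm_U_mulmn; exists i.
apply: idealX_lepm (ideal_gen_ideal _) _ (_ : U_(i) *+ a i <= m)%MM.
  by apply: mem_ideal_gen; exists i; rewrite mpolyXn.
by rewrite lepm_U_mulmn.
Qed.

Lemma socle_pure_powers b : socle_monomial pure_powers b <-> b = corner.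
Proof.
split=> [[nJb JbU] | ->].
  have b_lt i : (b i < a i)%N.
    by rewrite ltnNge; apply/negP => le_ab; apply/nJb/pure_powersX; exists i.
  apply/mnmP => i; rewrite mnmE; have [j] := (pure_powersX _).1 (JbU i).
  rewrite mnmDE mnm1E; case: eqP => [<-|_]; have := b_lt i; have := b_lt j; lia.
split=> [/pure_powersX [i] | i]; first by rewrite mnmE; have := a_gt0 i; lia.
by apply/pure_powersX; exists i; rewrite mnmDE mnm1E eqxx mnmE; have := a_gt0 i; lia.
Qed.

Lemma monomial_ideal_sub_pure_powers I :
  is_monomial_ideal I -> ~ I 'X_[corner] -> forall f, I f -> pure_powers f.
Proof.
move=> monI nIc f If; apply: ideal_msupp (ideal_gen_ideal _) _ => m fm.
apply/pure_powersX; case: (boolP [exists i, a i <= m i]%N) => [/existsP // | /existsPn m_lt].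
case: nIc; apply: idealX_lepm monI.1 (monomial_ideal_msupp monI If fm) _.
by apply: lepm_corner => i; rewrite ltnNge m_lt.
Qed.

End PurePowers.
End MonomialIdeals.

Theorem corollary4p4 (K : fieldType) (t : nat) (I : pset K t) (a : 'I_t -> nat) :
  is_monomial_ideal I ->
  is_m_primary I ->
  (forall i, (0 < a i)%N) ->
  (forall i, in_mingens I (U_(i) *+ a i)%MM) ->
  (eq_pset I (ideal_gen (fun g => exists i : 'I_t, g = 'X_i ^+ a i))
   <-> is_vnumber I ((\sum_(i < t) a i) - t)%N).
Proof.
move=> monI _ a_gt0 mingens.
have Ipow i : I 'X_[U_(i) *+ a i] := (mingens i).1.
rewrite -(mdeg_corner a_gt0); split=> [eqIJ | [witness _]].
  have socleI b : socle_monomial I b <-> b = corner a.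
    by rewrite -(socle_pure_powers K a_gt0); apply: eq_socle_monomial.
  split; first by apply/vnum_witness_socle/socleI.
  by move=> k /(socle_of_vnum_witness monI Ipow) [b /socleI -> <-].
have [b [nIb _] deg_b] := socle_of_vnum_witness monI Ipow witness.
have b_corner : b = corner a.
  apply: lepm_mdeg_eq deg_b; apply: lepm_corner.
  exact: pure_power_exponent_lt monI.1 Ipow nIb.
move=> f; split.
  by apply: (monomial_ideal_sub_pure_powers (a := a) monI) f; rewrite -b_corner.
by apply: ideal_gen_min monI.1 _ f => _ [i ->]; rewrite mpolyXn.
Qed.
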